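(* Let $m,n\in\mathbb N$, $M_A=M_m(\mathbb C)$, $M_B=M_n(\mathbb C)$, let $U_A\in M_A$, $U_B\in M_B$ be unitary matrices, and let $\{e_{ij}:1\le i,j\le m\}$ be the matrix units of $M_m(\mathbb C)$. A linear map $\psi:M_A\to M_B$ is $(U_A,U_B)$-CP if and only if the block matrix $[U_B^*\psi(U_Ae_{ij})]_{1\le i,j\le m}\in M_m(M_n(\mathbb C))$ is positive semidefinite.
   Context: For $k\in\mathbb N$ and a unitary $U$, write $U^k=\mathrm{diag}(U,\dots,U)$. A linear map $\psi:M_A\to M_B$ is $(U_A,U_B)$-CP if for every $k\in\mathbb N$ and every $V=[V_{ij}]\in M_k(M_A)$ with $(U_A^k)^*V\ge0$, one has $(U_B^k)^*[\psi(V_{ij})]\ge0$. *)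

From HB Require Import structures.
From mathcomp Require Import all_boot all_order all_algebra.
From mathcomp Require Import complex.
From mathcomp Require Import Rstruct.
From Stdlib Require Import Reals.
Set Implicit Arguments. Unset Strict Implicit. Unset Printing Implicit Defensive.
Import Order.TTheory GRing.Theory Num.Theory.
Local Open Scope ring_scope.
Local Open Scope sesquilinear_scope.

Definition C : numClosedFieldType := (Rdefinitions.R)[i].

(* Positive semidefinite N x N complex matrix: v A v^* >= 0 for all vectors v
   (in the partial order of C, 0 <= z means z is a nonnegative real). *)
Definition psdmx (N : nat) (A : 'M[C]_N) : Prop :=
  forall v : 'rV[C]_N, 0 <= (v *m A *m v ^t*) 0 0.

(* U^k = diag(U, ..., U) (k copies), as an element of M_k(M_m). *)
Definition ampl (m k : nat) (U : 'M[C]_m) : 'M[C]_(\sum_(i < k) m) :=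
  \mxdiag_(i < k) U.

Definition UCP (m n : nat) (UA : 'M[C]_m) (UB : 'M[C]_n)
  (psi : {linear 'M[C]_m -> 'M[C]_n}) : Prop :=
  forall (k : nat) (V : 'I_k -> 'I_k -> 'M[C]_m),
    psdmx ((ampl k UA) ^t* *m \mxblock_(i < k, j < k) V i j) ->
    psdmx ((ampl k UB) ^t* *m \mxblock_(i < k, j < k) psi (V i j)).

From HB Require Import structures.
From mathcomp Require Import all_boot all_order all_algebra.
From mathcomp Require Import ring.
Set Implicit Arguments. Unset Strict Implicit. Unset Printing Implicit Defensive.
Import GRing.Theory Num.Theory Num.Def.
Local Open Scope ring_scope.
Local Open Scope sesquilinear_scope.

(* Since [UA] is unitary, [V = UA W] is a bijective change of variables that
   turns the hypothesis [(UA^k)^* V >= 0] into [[W_ij] >= 0]; so [psi] is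
   (UA, UB)-CP iff [Phi W := UB^* psi (UA W)] is completely positive, and the
   block matrix of the theorem is the Choi matrix [[Phi e_ab]] of [Phi].
   Choi's argument then applies: [[e_ab]] is a Gram matrix, hence positive;
   conversely, by the spectral theorem a positive [[W_ij]] is a sum of rank-one
   Gram matrices [[y_i^* y_j]], and [[Phi (y_i^* y_j)] = T^* [Phi e_ab] T] with
   [T = [y_i(a) I_n]_(a, i)] is positive. *)

Section AdjointBlocks.
Variable F : numClosedFieldType.

Lemma trmxC_mul m n p (A : 'M[F]_(m, n)) (B : 'M[F]_(n, p)) :
  (A *m B)^t* = B^t* *m A^t*.
Proof. by rewrite trmx_mul map_mxM. Qed.

Lemma trmxC_delta m n i j : (delta_mx i j : 'M[F]_(m, n))^t* = delta_mx j i.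
Proof. by rewrite trmx_delta map_delta_mx. Qed.

Lemma trmxC_scalar n (c : F) : (c%:M : 'M[F]_n)^t* = (c^*)%:M.
Proof. by rewrite tr_scalar_mx map_scalar_mx. Qed.

Lemma trmxC_mxblock p q r s (B : 'I_p -> 'I_q -> 'M[F]_(r, s)) :
  (\mxblock_(i, j) B i j)^t* = \mxblock_(i, j) (B j i)^t*.
Proof. by apply/matrixP => i j; rewrite !mxE. Qed.

Lemma trmxC_mxrow k p q (R : 'I_k -> 'M[F]_(p, q)) :
  (\mxrow_j R j)^t* = \mxcol_j (R j)^t*.
Proof. by apply/matrixP => i j; rewrite !mxE. Qed.

Lemma mxrow_gram k p q (Y : 'I_k -> 'M[F]_(p, q)) :
  (\mxrow_i Y i)^t* *m \mxrow_j Y j = \mxblock_(i, j) ((Y i)^t* *m Y j).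
Proof. by rewrite trmxC_mxrow mul_mxcol_mxrow. Qed.

Lemma submxblock_gram k p (x : 'rV[F]_(\sum_(i < k) p)) i j :
  submxblock (x^t* *m x) i j = (submxrow x i)^t* *m submxrow x j.
Proof. by rewrite -[in LHS](submxrowK x) mxrow_gram mxblockK. Qed.

Lemma gram_sum_row p q (X : 'M[F]_(p, q)) :
  X^t* *m X = \sum_r (row r X)^t* *m row r X.
Proof.
apply/matrixP => a b; rewrite !mxE summxE; apply: eq_bigr => r _.
by rewrite !mxE big_ord1 !mxE.
Qed.

Lemma conjC_eq_of_real (a b : F) :
  a + b \is Num.real -> 'i * (b - a) \is Num.real -> a^* = b.
Proof.
move=> /CrealP s_real /CrealP t_real.
rewrite rmorphD /= in s_real; rewrite rmorphM /= rmorphB /= conjCi in t_real.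
have i2_neq0 : 2 * 'i != 0 :> F by rewrite mulf_neq0 ?neq0Ci ?pnatr_eq0.
apply: (mulfI i2_neq0).
transitivity ('i * (a^* + b^*) + - 'i * (b^* - a^*)); first ring.
by rewrite s_real t_real; ring.
Qed.

End AdjointBlocks.

Lemma ampl_trmxC_mul k m (U : 'M[C]_m) (V : 'I_k -> 'I_k -> 'M[C]_m) :
  (ampl k U)^t* *m \mxblock_(i, j) V i j = \mxblock_(i, j) (U^t* *m V i j).
Proof.
have -> : (ampl k U)^t* = \mxdiag_(i < k) U^t*.
  rewrite /ampl /mxdiag trmxC_mxblock; apply: eq_mxblock => i j.
  rewrite eq_sym; case: eqP => _; last by rewrite trmx0 map_mx0.
  by rewrite !conform_mx_id.
by rewrite mul_mxdiag_mxblock.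
Qed.

Lemma psdmx_gram p N (X : 'M[C]_(p, N)) : psdmx (X^t* *m X).
Proof.
move=> v; rewrite mulmxA -mulmxA -[X in _ *m (X *m _)]trmxCK -trmxC_mul.
by rewrite -dotmxE dnorm_ge0.
Qed.

Lemma psdmx_congr N M (A : 'M[C]_N) (T : 'M[C]_(N, M)) :
  psdmx A -> psdmx (T^t* *m A *m T).
Proof.
by move=> psdA v; have := psdA (v *m T^t*); rewrite trmxC_mul trmxCK !mulmxA.
Qed.

Lemma psdmx_sum N I (r : seq I) (A : I -> 'M[C]_N) :
  (forall i, psdmx (A i)) -> psdmx (\sum_(i <- r) A i).
Proof.
move=> psdA; apply: big_ind => // [v|B B' psdB psdB' v].
  by rewrite mulmx0 mul0mx mxE.
by rewrite mulmxDr mulmxDl mxE addr_ge0.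
Qed.

Lemma psdmx_diag_ge0 N (A : 'M[C]_N) : psdmx A -> forall i, 0 <= A i i.
Proof.
by move=> psdA i; rewrite -(rV_formee A conjC) /form_of_matrix trace_mx11.
Qed.

Section Hermitian.
Variables (N : nat) (A : 'M[C]_N).
Hypothesis psdA : psdmx A.
Local Notation "''[' u , v ]" := (@form_of_matrix _ _ conjC 1 A u v).

Lemma psd_form_real u : '[u, u] \is Num.real.
Proof. by apply/ger0_real; rewrite /form_of_matrix trace_mx11; apply: psdA. Qed.

Lemma psd_form_conj u v : '[u, v]^* = '[v, u].
Proof.
have sym_real w : '[u, w] + '[w, u] \is Num.real.
  have := psd_form_real (u + w); rewrite linearDl /= !linearDr /=.
  rewrite addrA -(addrA '[u, u]) (rpredDr _ (psd_form_real w)).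
  by rewrite (rpredDl _ (psd_form_real u)).
(* polarization at [w = v] and [w = 'i *: v] *)
apply: conjC_eq_of_real; first exact: sym_real.
have := sym_real ('i *: v); rewrite linearZl /= linearZr /= conjCi.
by rewrite mulNr addrC -mulrBr.
Qed.

Lemma psdmx_hermitian : A^t* = A.
Proof.
by apply/matrixP => b a; rewrite !mxE -!(rV_formee A conjC) psd_form_conj.
Qed.

End Hermitian.

Lemma psdmx_gram_factor N (A : 'M[C]_N) :
  psdmx A -> exists X : 'M[C]_N, A = X^t* *m X.
Proof.
move=> psdA; pose P := spectralmx A; pose d := spectral_diag A.
have uP : P \is unitarymx := spectral_unitarymx A.
have eA : A = P^t* *m diag_mx d *m P.
  have /orthomx_spectralP : A \is normalmx.
    by apply/normalmxP; rewrite psdmx_hermitian.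
  by rewrite invmx_unitary.
have d_ge0 i : 0 <= d 0 i.
  have := psdmx_diag_ge0 (psdmx_congr (P^t*) psdA) i.
  rewrite trmxCK eA !mulmxA (unitarymxP uP) mul1mx mulmxtVK //.
  by rewrite mxE eqxx mulr1n.
pose s := map_mx sqrtC d.
have s_gram : (diag_mx s)^t* *m diag_mx s = diag_mx d.
  rewrite tr_diag_mx map_diag_mx mul_diag_mx.
  apply/matrixP => i j; rewrite !mxE.
  case: eqP => _; last by rewrite !mulr0n mulr0.
  by rewrite /= !mulr1n conj_Creal ?ger0_real ?sqrtC_ge0 // -expr2 sqrtCK.
exists (diag_mx s *m P).
by rewrite eA trmxC_mul -s_gram !mulmxA.
Qed.

Definition completely_positive m n (phi : 'M[C]_m -> 'M[C]_n) : Prop :=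
  forall k (W : 'I_k -> 'I_k -> 'M[C]_m),
    psdmx (\mxblock_(i, j) W i j) -> psdmx (\mxblock_(i, j) phi (W i j)).

Definition choi_mx m n (phi : 'M[C]_m -> 'M[C]_n) :=
  \mxblock_(a < m, b < m) phi (delta_mx a b).

Lemma psdmx_mxblock_delta m :
  psdmx (\mxblock_(a < m, b < m) (delta_mx a b : 'M[C]_m)).
Proof.
have -> : \mxblock_(a < m, b < m) (delta_mx a b : 'M[C]_m) =
          (\mxrow_a (delta_mx 0 a : 'rV_m))^t* *m \mxrow_b delta_mx 0 b.
  rewrite mxrow_gram; apply: eq_mxblock => a b.
  by rewrite trmxC_delta mul_delta_mx.
exact: psdmx_gram.
Qed.

Lemma choi_mx_congr_gram m n (phi : {linear 'M[C]_m -> 'M[C]_n}) k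
    (y : 'I_k -> 'rV[C]_m) :
  let T := \mxblock_(a < m, i < k) ((y i 0 a)%:M : 'M[C]_n) in
  \mxblock_(i, j) phi ((y i)^t* *m y j) = T^t* *m choi_mx phi *m T.
Proof.
move=> T; rewrite /T trmxC_mxblock !mul_mxblock; apply: eq_mxblock => i j.
rewrite [_ *m y j]matrix_sum_delta linear_sum.
under [RHS]eq_bigr do rewrite mulmx_suml.
rewrite [RHS]exchange_big; apply: eq_bigr => a _; rewrite linear_sum.
apply: eq_bigr => b _.
rewrite linearZ /= (@trmxC_scalar C) mul_mx_scalar mul_scalar_mx scalerA.
by rewrite !mxE big_ord1 !mxE mulrC.
Qed.

Theorem choi_completely_positive m n (phi : {linear 'M[C]_m -> 'M[C]_n}) :
  completely_positive phi <-> psdmx (choi_mx phi).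
Proof.
split=> [cp | psd_choi k W psdW]; first exact/cp/psdmx_mxblock_delta.
have [X eW] := psdmx_gram_factor psdW.
pose y r i := submxrow (row r X) i.
have Wij i j : W i j = \sum_r (y r i)^t* *m y r j.
  rewrite -(mxblockK W i j) eW gram_sum_row submxblock_sum.
  by apply: eq_bigr => r _; rewrite submxblock_gram.
have -> : \mxblock_(i, j) phi (W i j) =
          \sum_r \mxblock_(i, j) phi ((y r i)^t* *m y r j).
  by rewrite -mxblock_sum; apply: eq_mxblock => i j; rewrite Wij linear_sum.
by apply: psdmx_sum => r; rewrite choi_mx_congr_gram; apply: psdmx_congr.
Qed.

Lemma UCP_completely_positive m n (UA : 'M[C]_m) (UB : 'M[C]_n)
    (psi : {linear 'M[C]_m -> 'M[C]_n}) :
  UA \is unitarymx ->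
  UCP UA UB psi <-> completely_positive (fun W => UB^t* *m psi (UA *m W)).
Proof.
move=> uUA.
have UAK W : UA^t* *m (UA *m W) = W.
  by rewrite -invmx_unitary // mulKmx // unitarymx_unit.
have UAKV W : UA *m (UA^t* *m W) = W by rewrite mulmxA (unitarymxP uUA) mul1mx.
split=> cp k V; rewrite ?ampl_trmxC_mul => psdV.
  have := cp k (fun i j => UA *m V i j); rewrite !ampl_trmxC_mul.
  by under eq_mxblock do rewrite UAK; apply.
have := cp k (fun i j => UA^t* *m V i j) psdV.
by under eq_mxblock do rewrite UAKV.
Qed.

Theorem theorem3p2 (m n : nat) (UA : 'M[C]_m) (UB : 'M[C]_n)
  (hUA : UA \is unitarymx) (hUB : UB \is unitarymx)
  (psi : {linear 'M[C]_m -> 'M[C]_n}) :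
  UCP UA UB psi <->
  psdmx (\mxblock_(i < m, j < m) (UB ^t* *m psi (UA *m delta_mx i j))).
Proof.
pose phi : {linear 'M[C]_m -> 'M[C]_n} := mulmx (UB^t*) \o psi \o mulmx UA.
rewrite (UCP_completely_positive _ _ hUA).
exact: (choi_completely_positive phi).
Qed.
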